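(* Let $D$ be a digon-free digraph with $n$ vertices, and let $\tilde{\Delta}=\max\{\sqrt{d^+(v)d^-(v)} : v\in V(D)\}$. Then $$\alpha(D)\geq \frac{n}{\frac{2\tilde{\Delta}}{3}+1}.$$
   Context: All digraphs are finite, loopless and strict (at most one edge from $u$ to $v$ for distinct $u,v$). A digraph is digon-free if it has no directed cycle of length $2$. $d^+(v)$ and $d^-(v)$ denote the out-degree and in-degree of $v$. A subset $S\subseteq V(D)$ is acyclic if $D[S]$ contains no directed cycle; $\alpha(D)$ is the maximum size of an acyclic subset of $V(D)$. *)

From mathcomp Require Import all_boot all_order all_algebra.
From mathcomp Require Import boolp reals.
Set Implicit Arguments. Unset Strict Implicit. Unset Printing Implicit Defensive.
Import Order.TTheory GRing.Theory Num.Theory.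

(* A digraph on a finite vertex type T is an edge relation E : rel T
   (strictness is automatic). *)
Definition loopless (T : finType) (E : rel T) : Prop := forall v, ~~ E v v.
Definition digon_free (T : finType) (E : rel T) : Prop :=
  forall u v, ~~ (E u v && E v u).

Definition outdeg (T : finType) (E : rel T) (v : T) : nat := #|[set w | E v w]|.
Definition indeg (T : finType) (E : rel T) (v : T) : nat := #|[set u | E u v]|.

(* S is acyclic: D[S] contains no directed cycle, i.e. no nonempty closed
   walk x1 -> x2 -> ... -> xk -> x1 with all xi in S. *)
Definition acyclic_set (T : finType) (E : rel T) (S : {set T}) : Prop :=
  ~ exists s : seq T, [/\ s != [::], all (fun x => x \in S) s & cycle E s].

Definition alpha (T : finType) (E : rel T) : nat :=
  \max_(S : {set T} | `[< acyclic_set E S >]) #|S|.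

(* max over v of sqrt(d^+(v) d^-(v)), 0 on the empty digraph *)
Definition tDelta (R : realType) (T : finType) (E : rel T) : R :=
  (\big[Num.max/0]_(v : T) Num.sqrt ((outdeg E v * indeg E v)%:R))%R.

From mathcomp Require Import all_boot all_order all_algebra.
From mathcomp Require Import boolp reals.
From mathcomp Require Import ring lra.
Import Order.TTheory GRing.Theory Num.Theory.
Local Open Scope ring_scope.

(* Give a vertex with out- and in-degree a, b in the current vertex set U the
   weight h(a, b) = 1/(a+1) + 1/(b+1) - 1/(a+b+1), and let the potential F(U)
   be the total weight of D[U].  Since D is digon-free, deleting z from U lowers
   at most one of the two degrees of any other vertex, and the recurrence
   a h(a-1,b) + b h(a,b-1) + [a = 0 or b = 0] = (a+b+1) h(a,b) shows that
   F(U \ z) + [z is a source or sink of D[U]] averages exactly F(U) over z in U.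
   Hence some z can be deleted without loss, provided we collect z when it is a
   source or sink; such a z extends any acyclic subset of U \ z, so induction
   yields an acyclic set of size at least F(V).  Finally a + b >= 2 sqrt(ab)
   gives h(a, b) >= 1 / (2 sqrt(ab)/3 + 1). *)

Section VertexWeight.
Variable R : realFieldType.

Definition vertex_weight (a b : nat) : R :=
  (a%:R + 1)^-1 + (b%:R + 1)^-1 - (a%:R + b%:R + 1)^-1.

Lemma vertex_weight_recurrence (a b : nat) :
  a%:R * vertex_weight a.-1 b + b%:R * vertex_weight a b.-1
    + ((a == 0%N) || (b == 0%N) : nat)%:R
  = (a + b + 1)%:R * vertex_weight a b.
Proof.
rewrite /vertex_weight; case: a => [|a]; case: b => [|b];
  rewrite /= ?mul0r ?add0r ?addr0 -?natr1 ?natrD; field;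
  by rewrite ?(natr1, =^~ natrD) ?pnatr_eq0 ?addnS.
Qed.

Lemma vertex_weight_subn (a b : nat) (ea eb : bool) : ~~ (ea && eb) ->
  vertex_weight (a - ea) (b - eb)
  = vertex_weight a b + ea%:R * (vertex_weight a.-1 b - vertex_weight a b)
      + eb%:R * (vertex_weight a b.-1 - vertex_weight a b).
Proof. by case: ea; case: eb => //= _; rewrite ?subn1 ?subn0; ring. Qed.

End VertexWeight.

Lemma vertex_weight_ge (R : rcfType) (a b : nat) :
  (2 * Num.sqrt (a * b)%:R / 3 + 1)^-1 <= vertex_weight R a b.
Proof.
rewrite /vertex_weight natrM.
move: (a%:R) (b%:R) (ler0n R a) (ler0n R b) => x y x0 y0.
set s := Num.sqrt _; set p := x + y + 1.
have s0 : 0 <= s by rewrite sqrtr_ge0.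
have s2 : s ^+ 2 = x * y by rewrite sqr_sqrtr // mulr_ge0.
have am_gm : 2 * s + 1 <= p.
  have : (2 * s) ^+ 2 <= (x + y) ^+ 2.
    by rewrite exprMn s2; have := sqr_ge0 (x - y); nra.
  by rewrite ler_sqr ?nnegrE /p; lra.
have -> : (x + 1)^-1 + (y + 1)^-1 - p^-1 = (p ^+ 2 - s ^+ 2) / ((s ^+ 2 + p) * p).
  rewrite s2 /p; field.
  have xy0 : 0 <= x * y by exact: mulr_ge0.
  by do ?[apply/andP; split]; apply: lt0r_neq0; lra.
have c0 : 0 < 2 * s / 3 + 1 by lra.
have D0 : 0 < (s ^+ 2 + p) * p by rewrite mulr_gt0 //; nra.
rewrite (ler_pdivlMr _ _ D0) mulrC (ler_pdivrMr _ _ c0).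
(* 3 ((p^2 - s^2)(2s/3 + 1) - (s^2 + p) p) = s ((2p + s)(p - 2s - 1) + 2 (p - s)) *)
have : 0 <= s * ((2 * p + s) * (p - 2 * s - 1) + 2 * (p - s)).
  by apply: mulr_ge0 => //; apply: addr_ge0; [apply: mulr_ge0|]; lra.
nra.
Qed.

Definition outdeg_in {T : finType} (E : rel T) (U : {set T}) (v : T) : nat :=
  #|[set w in U | E v w]|.

Definition indeg_in {T : finType} (E : rel T) (U : {set T}) (v : T) : nat :=
  outdeg_in (fun x y => E y x) U v.

Definition source_or_sink {T : finType} (E : rel T) (U : {set T}) (v : T) : bool :=
  (outdeg_in E U v == 0%N) || (indeg_in E U v == 0%N).

Lemma outdeg_inE {T : finType} (E : rel T) (U : {set T}) (v : T) :
  outdeg_in E U v = (\sum_(w in U) E v w)%N.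
Proof.
rewrite /outdeg_in -sum1_card big_mkcond [RHS]big_mkcond /=.
by apply: eq_bigr => w _; rewrite inE; case: (w \in U); case: (E v w).
Qed.

Lemma outdeg_inD1 {T : finType} (E : rel T) (U : {set T}) (v z : T) :
  z \in U -> outdeg_in E (U :\ z) v = (outdeg_in E U v - E v z)%N.
Proof.
move=> zU; rewrite !outdeg_inE (big_setD1 z zU) /= addKn.
by apply: eq_bigl => w; rewrite !inE.
Qed.

Lemma indeg_inD1 {T : finType} (E : rel T) (U : {set T}) (v z : T) :
  z \in U -> indeg_in E (U :\ z) v = (indeg_in E U v - E z v)%N.
Proof. exact: outdeg_inD1. Qed.

Lemma acyclic_set0 {T : finType} (E : rel T) : acyclic_set E set0.
Proof. by case=> [[|x s] [//= _ /andP[]]]; rewrite inE. Qed.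

Lemma acyclic_setU1 {T : finType} (E : rel T) (U S : {set T}) (z : T) :
  z \in U -> S \subset U -> source_or_sink E U z ->
  acyclic_set E S -> acyclic_set E (z |: S).
Proof.
move=> zU sSU z_src acyS [s [s_nil /allP sS cycle_s]].
have sU x : x \in s -> x \in U.
  by move/sS => /setU1P[-> //|/(subsetP sSU)].
have [zs|zNs] := boolP (z \in s); last first.
  apply: acyS; exists s; split=> //; apply/allP => x xs.
  by have /setU1P[xz|//] := sS x xs; rewrite -xz xs in zNs.
case/orP: z_src => /eqP/cards0_eq/setP no_nbr.
  by have := no_nbr (next s z); rewrite !inE sU ?mem_next // next_cycle.
by have := no_nbr (prev s z); rewrite !inE sU ?mem_prev // prev_cycle.
Qed.

Section Potential.
Context (R : realFieldType) {T : finType} (E : rel T).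
Hypotheses (hloop : loopless E) (hdigon : digon_free E).

Definition potential (U : {set T}) : R :=
  \sum_(v in U) vertex_weight R (outdeg_in E U v) (indeg_in E U v).

Lemma sum_weight_removals (U : {set T}) (v : T) : v \in U ->
  \sum_(z in U :\ v) vertex_weight R (outdeg_in E (U :\ z) v) (indeg_in E (U :\ z) v)
    + (source_or_sink E U v)%:R
  = #|U|%:R * vertex_weight R (outdeg_in E U v) (indeg_in E U v).
Proof.
move=> vU; set a := outdeg_in E U v; set b := indeg_in E U v.
have := vertex_weight_recurrence R a b.
have removal z : z \in U :\ v ->
    vertex_weight R (outdeg_in E (U :\ z) v) (indeg_in E (U :\ z) v)
  = vertex_weight R a b + (E v z)%:R * (vertex_weight R a.-1 b - vertex_weight R a b)
      + (E z v)%:R * (vertex_weight R a b.-1 - vertex_weight R a b).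
  move=> /setD1P[_ zU].
  by rewrite outdeg_inD1 // indeg_inD1 // (vertex_weight_subn R _ _ _ _ (hdigon v z)).
rewrite (eq_bigr _ removal) /source_or_sink -/a -/b.
move: (vertex_weight R a b) (vertex_weight R a.-1 b) (vertex_weight R a b.-1) => w wa wb.
rewrite !big_split /= -!big_distrl /= sumr_const -!natr_sum.
rewrite -outdeg_inE -(outdeg_inE (fun x y => E y x)) -/(indeg_in E _ v).
rewrite outdeg_inD1 // indeg_inD1 // (negbTE (hloop v)) !subn0 -/a -/b.
by rewrite (cardsD1 v U) vU add1n mulr_natl mulrS !natrD; lra.
Qed.

Lemma potential_average (U : {set T}) :
  \sum_(z in U) (potential (U :\ z) + (source_or_sink E U z)%:R)
  = #|U|%:R * potential U.
Proof.
rewrite big_split /= /potential (exchange_big_dep (mem U)) /=; last first.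
  by move=> z v _ /setD1P[].
rewrite -big_split mulr_sumr; apply: eq_bigr => v vU /=.
rewrite -sum_weight_removals //; congr (_ + _); apply: eq_bigl => z.
by rewrite !in_setD1 eq_sym vU andbT andbC.
Qed.

Lemma exists_potential_removal {U : {set T}} {z0 : T} : z0 \in U ->
  exists2 z, z \in U & potential U <= potential (U :\ z) + (source_or_sink E U z)%:R.
Proof.
move=> z0U; apply/exists_inP/contraT; rewrite negb_exists_in => /forall_inP loss.
have : \sum_(z in U) (potential (U :\ z) + (source_or_sink E U z)%:R)
       < \sum_(z in U) potential U.
  apply: ltr_sum => [|z /loss]; last by rewrite -ltNge.
  by apply/hasP; exists z0; rewrite ?mem_index_enum.
by rewrite potential_average sumr_const mulr_natl ltxx.
Qed.

Lemma exists_acyclic_subset_ge_potential (U : {set T}) :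
  exists S : {set T}, [/\ S \subset U, acyclic_set E S & potential U <= #|S|%:R].
Proof.
have [n] := ubnP #|U|; elim: n U => // n IH U /ltnSE leUn.
have [->|[z0 z0U]] := set_0Vmem U.
  exists set0; rewrite sub0set /potential big_set0 cards0.
  by split=> //; apply: acyclic_set0.
have [z zU le_removal] := exists_potential_removal z0U.
have [|S [sSUz acyS leS]] := IH (U :\ z).
  exact: leq_trans (proper_card (properD1 zU)) leUn.
have sSU : S \subset U := subset_trans sSUz (subD1set U z).
have [z_src|z_nsrc] := boolP (source_or_sink E U z); last first.
  exists S; split=> //; apply: le_trans le_removal _.
  by rewrite (negbTE z_nsrc) addr0.
have zNS : z \notin S by apply: contraTN isT => /(subsetP sSUz); rewrite !inE eqxx.
exists (z |: S); split.
- by rewrite subUset sub1set zU.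
- exact: acyclic_setU1 zU sSU z_src acyS.
- by rewrite cardsU1 zNS natrD; move: le_removal; rewrite z_src; lra.
Qed.

End Potential.

Lemma acyclic_card_le_alpha {T : finType} (E : rel T) (S : {set T}) :
  acyclic_set E S -> (#|S| <= alpha E)%N.
Proof. by move=> acyS; rewrite /alpha (bigD1 S) ?leq_maxl //; apply/asboolP. Qed.

Lemma outdeg_in_setT {T : finType} (E : rel T) (v : T) :
  outdeg_in E [set: T] v = outdeg E v.
Proof. by apply: eq_card => w; rewrite !inE. Qed.

Lemma indeg_in_setT {T : finType} (E : rel T) (v : T) :
  indeg_in E [set: T] v = indeg E v.
Proof. by apply: eq_card => w; rewrite !inE. Qed.

Lemma vertex_weight_ge_tDelta (R : realType) {T : finType} (E : rel T) (v : T) :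
  (2 * tDelta R E / 3 + 1)^-1 <= vertex_weight R (outdeg E v) (indeg E v).
Proof.
apply: le_trans (vertex_weight_ge _ _ _).
have s_ge0 : 0 <= Num.sqrt ((outdeg E v * indeg E v)%:R) :> R by rewrite sqrtr_ge0.
have s_le : Num.sqrt ((outdeg E v * indeg E v)%:R) <= tDelta R E.
  exact: (le_bigmax 0 (fun v => Num.sqrt ((outdeg E v * indeg E v)%:R : R))).
by rewrite lef_pV2 ?posrE; lra.
Qed.

Theorem mainTheorem2 (R : realType) (T : finType) (E : rel T)
  (hloop : loopless E) (hdigon : digon_free E) :
  (#|T|%:R : R) / (2 * tDelta R E / 3 + 1) <= (alpha E)%:R.
Proof.
have [S [_ acyS le_potS]] := exists_acyclic_subset_ge_potential R E hloop hdigon [set: T].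
have le_S_alpha : (#|S|%:R : R) <= (alpha E)%:R by rewrite ler_nat acyclic_card_le_alpha.
apply: le_trans le_S_alpha; apply: le_trans le_potS.
rewrite /potential -cardsT mulr_natl -sumr_const; apply: ler_sum => v _.
by rewrite outdeg_in_setT indeg_in_setT vertex_weight_ge_tDelta.
Qed.
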